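(* Let $\mathcal{H}$ be a Hilbert space, $H\in\mathcal{B}(\mathcal{H})$ a hermitian operator and $P\in\mathcal{B}(\mathcal{H})$ a hermitian projection. Then for all $t\ge0$ and $n\in\mathbb{N}$, $$\Big\|\big(Pe^{-i\frac tnH}\big)^n-e^{-itPHP}P\Big\|_\infty\le\frac1n\Big(t\|H\|_\infty+\frac52t^2\|H\|_\infty^2\Big).$$
   Context: $\|\cdot\|_\infty$ denotes the operator norm on $\mathcal{B}(\mathcal{H})$. A hermitian projection is a bounded operator $P$ with $P^2=P=P^\dagger$. *)

From HB Require Import structures.
From mathcomp Require Import all_boot all_order all_algebra.
From mathcomp Require Export complex.
From mathcomp Require Import all_classical all_reals all_analysis.

Set Implicit Arguments.
Unset Strict Implicit.
Unset Printing Implicit Defensive.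

Import Order.TTheory GRing.Theory Num.Theory numFieldNormedType.Exports.
Local Open Scope ring_scope.
Local Open Scope complex_scope.
Local Open Scope classical_set_scope.

Record hilbertSpace (R : realType) := HilbertSpace {
  hs_car :> lmodType R[i];
  inner : hs_car -> hs_car -> R[i];
  inner_linear : forall (a : R[i]) (x y z : hs_car),
      inner x (a *: y + z) = a * inner x y + inner x z;
  inner_conj : forall x y : hs_car, inner y x = (inner x y)^*;
  inner_ge0 : forall x : hs_car, 0 <= inner x x;
  inner_eq0 : forall x : hs_car, inner x x = 0 -> x = 0;
  inner_complete : forall u : nat -> hs_car,
      (forall e : R, 0 < e -> exists N : nat, forall m n : nat,
          (N <= m)%N -> (N <= n)%N ->
          Num.sqrt (complex.Re (inner (u m - u n) (u m - u n))) < e) ->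
      exists v : hs_car,
        (fun n => Num.sqrt (complex.Re (inner (u n - v) (u n - v)))) @ \oo
          --> (0 : R)
}.

Section HilbertDefs.
Variables (R : realType) (V : hilbertSpace R).

Definition hnorm (x : V) : R := Num.sqrt (complex.Re (inner x x)).

Definition bounded_op (A : V -> V) : Prop :=
  (forall (a : R[i]) (x y : V), A (a *: x + y) = a *: A x + A y) /\
  exists c : R, forall x : V, hnorm (A x) <= c * hnorm x.

Definition opnorm (A : V -> V) : R :=
  sup [set hnorm (A x) | x in [set x : V | hnorm x <= 1]].

Definition hermitian_op (A : V -> V) : Prop :=
  bounded_op A /\ forall x y : V, inner (A x) y = inner x (A y).

Definition hprojection (P : V -> V) : Prop :=
  hermitian_op P /\ forall x : V, P (P x) = P x.

Definition hconv (u : nat -> V) (v : V) : Prop :=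
  (fun n => hnorm (u n - v)) @ \oo --> (0 : R).

Definition opexp (A : V -> V) : V -> V := fun x =>
  xget 0 [set v | hconv (fun N => \sum_(k < N) ((k`!)%:R : R[i])^-1 *: iter k A x) v].

End HilbertDefs.

(* Put tau = t / n, U = e^(-i tau H) and W = e^(-i tau PHP). Both are unitary, W maps the
   range of P into itself and W^n = e^(-i t PHP), so (PU)^n x - W^n P x telescopes into n
   one-step errors, each carried along by contractions. To first order P U = P - i tau P H
   and W P = P - i tau P H P, which differ by -i tau P H (1 - P); the Taylor remainders of U
   and W are at most (tau |H|)^2. Hence the first step costs tau |H| + 2 (tau |H|)^2 and each
   later one, starting in the range of P, only 2 (tau |H|)^2. *)

From HB Require Import structures.
From mathcomp Require Import all_boot all_order all_algebra.
From mathcomp Require Import complex.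
From mathcomp Require Import all_classical all_reals all_analysis.
From mathcomp Require Import ring lra.
Set Implicit Arguments.
Unset Strict Implicit.
Unset Printing Implicit Defensive.

Import Order.TTheory GRing.Theory Num.Theory numFieldNormedType.Exports.
Local Open Scope ring_scope.
Local Open Scope complex_scope.
Local Open Scope classical_set_scope.

Section ComplexNorm.
Variable R : rcfType.
Implicit Types (a : R[i]) (r : R).

Lemma normc_ge0 a : 0 <= Normc.normc a.
Proof. by case: a => p q; exact: sqrtr_ge0. Qed.

Lemma normcR r : Normc.normc r%:C = `|r|.
Proof. by rewrite /= expr0n addr0 sqrtr_sqr. Qed.

Lemma normcX a k : Normc.normc (a ^+ k) = Normc.normc a ^+ k.
Proof. by elim: k => [|k IH]; rewrite ?expr0 ?Normc.normc1 // !exprS Normc.normcM IH. Qed.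

Lemma normc_natV k : Normc.normc (k%:R : R[i])^-1 = k%:R^-1.
Proof.
by rewrite Normc.normcV -(rmorph_nat (real_complex R)) normcR ger0_norm.
Qed.

Lemma conjc_pure_imag r : (0 -i* r)^* = - (0 -i* r).
Proof. by apply/eqP; rewrite eq_complex /= oppr0 !eqxx. Qed.

Lemma normc_pure_imag r : Normc.normc (0 -i* r) = `|r|.
Proof. by rewrite /= expr0n add0r sqrrN sqrtr_sqr. Qed.

Lemma pure_imag_natmul k r : 0 -i* (k%:R * r) = k%:R * (0 -i* r).
Proof.
rewrite -(rmorph_nat (real_complex R)); apply/eqP.
by rewrite eq_complex /= !mul0r !mulr0 subr0 addr0 mulrN !eqxx.
Qed.

End ComplexNorm.

Section InnerProductSpace.
Variables (R : realType) (V : hilbertSpace R).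
Implicit Types (x y z : V) (a : R[i]) (r : R).

Lemma inner0r x : inner x 0 = 0.
Proof.
have := inner_linear 1 x 0 0; rewrite scale1r mul1r addr0 => h.
by apply: (@addrI _ (inner x 0)); rewrite addr0 -h.
Qed.

Lemma innerDr x y z : inner x (y + z) = inner x y + inner x z.
Proof. by rewrite -[y]scale1r inner_linear mul1r scale1r. Qed.

Lemma innerZr x a y : inner x (a *: y) = a * inner x y.
Proof. by rewrite -[a *: y]addr0 inner_linear inner0r addr0. Qed.

Lemma innerDl x y z : inner (y + z) x = inner y x + inner z x.
Proof. by rewrite inner_conj innerDr rmorphD /= -!inner_conj. Qed.

Lemma innerZl x a y : inner (a *: y) x = a^* * inner y x.
Proof. by rewrite inner_conj innerZr rmorphM /= -!inner_conj. Qed.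

Lemma inner0l x : inner 0 x = 0.
Proof. by rewrite inner_conj inner0r conjc0. Qed.

Lemma inner_sumr (I : Type) (s : seq I) (p : pred I) (f : I -> V) y :
  inner y (\sum_(i <- s | p i) f i) = \sum_(i <- s | p i) inner y (f i).
Proof. by elim/big_rec2: _ => [|i y1 y2 _ <-]; rewrite ?inner0r ?innerDr. Qed.

Lemma inner_suml (I : Type) (s : seq I) (p : pred I) (f : I -> V) y :
  inner (\sum_(i <- s | p i) f i) y = \sum_(i <- s | p i) inner (f i) y.
Proof. by elim/big_rec2: _ => [|i y1 y2 _ <-]; rewrite ?inner0l ?innerDl. Qed.

Definition dotr x y : R := complex.Re (inner x y).

Lemma dotrC x y : dotr x y = dotr y x.
Proof. by rewrite /dotr [in RHS]inner_conj; case: (inner x y). Qed.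

Lemma dotrDr x y z : dotr x (y + z) = dotr x y + dotr x z.
Proof. by rewrite /dotr innerDr; case: (inner x y); case: (inner x z). Qed.

Lemma dotrDl x y z : dotr (y + z) x = dotr y x + dotr z x.
Proof. by rewrite dotrC dotrDr !(dotrC x). Qed.

Lemma dotrZr x r y : dotr x (r%:C *: y) = r * dotr x y.
Proof. by rewrite /dotr innerZr; case: (inner x y) => p q /=; simpc. Qed.

Lemma dotrZl x r y : dotr (r%:C *: y) x = r * dotr y x.
Proof. by rewrite dotrC dotrZr dotrC. Qed.

Lemma dotrNr x y : dotr x (- y) = - dotr x y.
Proof. by rewrite /dotr -scaleN1r innerZr; case: (inner x y) => p q /=; simpc. Qed.

Lemma dotrNl x y : dotr (- y) x = - dotr y x.
Proof. by rewrite dotrC dotrNr dotrC. Qed.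

Lemma dotrBr x y z : dotr x (y - z) = dotr x y - dotr x z.
Proof. by rewrite dotrDr dotrNr. Qed.

Lemma dotrBl x y z : dotr (y - z) x = dotr y x - dotr z x.
Proof. by rewrite dotrDl dotrNl. Qed.

Lemma dotr0r x : dotr x 0 = 0.
Proof. by rewrite /dotr inner0r. Qed.

Lemma inner_self x : inner x x = (dotr x x)%:C.
Proof. by have := inner_ge0 x; rewrite /dotr lecE; case: (inner x x) => p q /= /andP[/eqP ->]. Qed.

Lemma dotrr_ge0 x : 0 <= dotr x x.
Proof. by have := inner_ge0 x; rewrite inner_self lecE /= => /andP[]. Qed.

Lemma dotrr_eq0 x : dotr x x = 0 -> x = 0.
Proof. by move=> h; apply: inner_eq0; rewrite inner_self h. Qed.

Lemma dotr_sqr_le x y : dotr x y ^+ 2 <= dotr x x * dotr y y.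
Proof.
have [y0|ny0] := eqVneq (dotr y y) 0.
  by rewrite (dotrr_eq0 y0) !dotr0r expr0n mulr0.
have y_gt0 : 0 < dotr y y by rewrite lt_def ny0 dotrr_ge0.
pose s := - dotr x y / dotr y y.
have sy : s * dotr y y = - dotr x y by rewrite /s mulrAC -mulrA mulfV // mulr1.
have := dotrr_ge0 (x + s%:C *: y).
rewrite !dotrDl !dotrDr !dotrZl !dotrZr (dotrC y x) => h.
have := mulr_ge0 h (ltW y_gt0); rewrite sy; nra.
Qed.

Lemma hnorm_ge0 x : 0 <= hnorm x.
Proof. exact: sqrtr_ge0. Qed.

Lemma hnorm_sqr x : hnorm x ^+ 2 = dotr x x.
Proof. by rewrite sqr_sqrtr // dotrr_ge0. Qed.

Lemma hnorm_eq0 x : hnorm x = 0 -> x = 0.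
Proof. by move=> h; apply: dotrr_eq0; rewrite -hnorm_sqr h expr0n. Qed.

Lemma hnorm0 : hnorm (0 : V) = 0.
Proof. by rewrite /hnorm -/(dotr 0 0) dotr0r sqrtr0. Qed.

Lemma hnormZ a x : hnorm (a *: x) = Normc.normc a * hnorm x.
Proof.
rewrite /hnorm -/(dotr (a *: x) (a *: x)) -/(dotr x x).
have -> : dotr (a *: x) (a *: x) = Normc.normc a ^+ 2 * dotr x x.
  rewrite /dotr innerZl innerZr inner_self.
  by case: a => p q /=; rewrite sqr_sqrtr ?addr_ge0 ?sqr_ge0 //; simpc; ring.
by rewrite sqrtrM ?sqr_ge0 // sqrtr_sqr ger0_norm ?normc_ge0.
Qed.

Lemma hnormN x : hnorm (- x) = hnorm x.
Proof. by rewrite /hnorm -!/(dotr _ _) dotrNl dotrNr opprK. Qed.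

Lemma hnorm_distC x y : hnorm (x - y) = hnorm (y - x).
Proof. by rewrite -hnormN opprB. Qed.

Lemma normr_dotr_le x y : `|dotr x y| <= hnorm x * hnorm y.
Proof.
rewrite -sqrtrM ?dotrr_ge0 // -sqrtr_sqr ler_sqrt ?dotr_sqr_le //.
by rewrite mulr_ge0 ?dotrr_ge0.
Qed.

Lemma hnormD x y : hnorm (x + y) <= hnorm x + hnorm y.
Proof.
rewrite -(ler_pXn2r (n := 2)) ?nnegrE ?addr_ge0 ?hnorm_ge0 //.
rewrite hnorm_sqr !dotrDl !dotrDr (dotrC y x) sqrrD !hnorm_sqr.
have := le_trans (ler_norm _) (normr_dotr_le x y); lra.
Qed.

Lemma hnormB x y : hnorm (x - y) <= hnorm x + hnorm y.
Proof. by rewrite -(hnormN y) hnormD. Qed.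

Lemma hnorm_distD3 x y z w : hnorm (x - w) <= hnorm (x - y) + hnorm (y - z) + hnorm (z - w).
Proof.
have -> : x - w = (x - y) + (y - z) + (z - w) by rewrite !addrA !subrK.
by apply: le_trans (hnormD _ _) _; rewrite lerD2r hnormD.
Qed.

Lemma hnorm_sum (I : Type) (s : seq I) (p : pred I) (f : I -> V) :
  hnorm (\sum_(i <- s | p i) f i) <= \sum_(i <- s | p i) hnorm (f i).
Proof.
elim/big_rec2: _ => [|i y1 y2 _ h]; first by rewrite hnorm0.
exact: le_trans (hnormD _ _) (lerD (lexx _) h).
Qed.

End InnerProductSpace.

Section Operators.
Variables (R : realType) (V : hilbertSpace R).
Implicit Types (x y z : V) (a : R[i]) (A K : V -> V).

Definition bounded_by K (L : R) := forall x, hnorm (K x) <= L * hnorm x.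

Section LinearOp.
Variables (K : V -> V) (K_lin : linear K).

Lemma lin0 : K 0 = 0.
Proof.
have := K_lin 1 0 0; rewrite !scale1r addr0 => h.
by apply: (@addrI _ (K 0)); rewrite addr0 -h.
Qed.

Lemma linD x y : K (x + y) = K x + K y.
Proof. by have := K_lin 1 x y; rewrite !scale1r. Qed.

Lemma linZ a x : K (a *: x) = a *: K x.
Proof. by rewrite -[a *: x]addr0 K_lin lin0 addr0. Qed.

Lemma linN x : K (- x) = - K x.
Proof. by rewrite -scaleN1r linZ scaleN1r. Qed.

Lemma linB x y : K (x - y) = K x - K y.
Proof. by rewrite linD linN. Qed.

Lemma lin_sum (I : Type) (s : seq I) (p : pred I) (f : I -> V) :
  K (\sum_(i <- s | p i) f i) = \sum_(i <- s | p i) K (f i).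
Proof. by elim/big_rec2: _ => [|i y1 y2 _ <-]; rewrite ?lin0 ?linD. Qed.

Lemma linear_iter k : linear (iter k K).
Proof. by elim: k => [|k IH] a x y //=; rewrite IH K_lin. Qed.

Lemma iter_scale a k x : iter k (fun z => a *: K z) x = a ^+ k *: iter k K x.
Proof.
elim: k => [|k IH] /=; first by rewrite scale1r.
by rewrite IH linZ scalerA exprS.
Qed.

End LinearOp.

Lemma linear_comp K1 K2 : linear K1 -> linear K2 -> linear (fun z => K1 (K2 z)).
Proof. by move=> h1 h2 a x y; rewrite h2 h1. Qed.

Lemma bounded_by_iter K L k x : bounded_by K L -> 0 <= L ->
  hnorm (iter k K x) <= L ^+ k * hnorm x.
Proof.
move=> KL L0; elim: k => [|k IH] /=; first by rewrite mul1r.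
by apply: le_trans (KL _) _; rewrite exprS -mulrA ler_wpM2l.
Qed.

Lemma opnorm_le A (B : R) :
  (forall x, hnorm x <= 1 -> hnorm (A x) <= B) -> opnorm A <= B.
Proof.
move=> AB; apply: ge_sup; last by move=> _ [x x1 <-]; exact: AB.
by exists (hnorm (A 0)), 0 => //=; rewrite hnorm0 ler01.
Qed.

Lemma opnorm_has_ubound A : bounded_op A ->
  has_ubound [set hnorm (A x) | x in [set x : V | hnorm x <= 1]].
Proof.
move=> [_ [c Ac]]; exists `|c| => _ [y y1 <-]; apply: le_trans (Ac y) _.
apply: le_trans (ler_wpM2r (hnorm_ge0 y) (ler_norm c)) _.
by rewrite -[leRHS]mulr1 ler_wpM2l.
Qed.

Lemma opnorm_ge0 A : bounded_op A -> 0 <= opnorm A.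
Proof.
move=> A_bd; apply: le_trans (hnorm_ge0 (A 0)) _.
by apply: (ub_le_sup (opnorm_has_ubound A_bd)); exists 0; rewrite //= hnorm0 ler01.
Qed.

Lemma bounded_by_opnorm A : bounded_op A -> bounded_by A (opnorm A).
Proof.
move=> A_bd x; have A_lin := A_bd.1.
have [x0|x_neq0] := eqVneq (hnorm x) 0.
  by rewrite x0 (hnorm_eq0 x0) lin0 // hnorm0 mulr0.
have x_gt0 : 0 < hnorm x by rewrite lt_def x_neq0 hnorm_ge0.
have xV_ge0 : 0 <= (hnorm x)^-1 by rewrite invr_ge0 hnorm_ge0.
pose y := ((hnorm x)^-1)%:C *: x.
have y1 : hnorm y = 1 by rewrite hnormZ normcR ger0_norm // mulVf.
have : hnorm (A y) <= opnorm A.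
  by apply: (ub_le_sup (opnorm_has_ubound A_bd)); exists y; rewrite //= y1.
by rewrite linZ // hnormZ normcR ger0_norm // ler_pdivrMl // mulrC.
Qed.

Section Projection.
Variables (P : V -> V) (P_proj : hprojection P).

Lemma proj_linear : linear P.
Proof. by case: P_proj => [[[]]]. Qed.

Lemma proj_idem x : P (P x) = P x.
Proof. by case: P_proj. Qed.

Lemma proj_selfadj x y : inner (P x) y = inner x (P y).
Proof. by case: P_proj => [[_]]. Qed.

Lemma dotr_proj_pythagoras x :
  dotr x x = dotr (P x) (P x) + dotr (x - P x) (x - P x).
Proof.
have PxPx : dotr (P x) (P x) = dotr x (P x) by rewrite /dotr proj_selfadj proj_idem.
have orth : dotr (P x) (x - P x) = 0 by rewrite dotrBr PxPx dotrC subrr.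
have -> : dotr x x = dotr (P x + (x - P x)) (P x + (x - P x)) by rewrite addrC subrK.
move: (x - P x) orth => y orth.
by rewrite !dotrDl !dotrDr orth (dotrC y) orth addr0 add0r.
Qed.

Lemma hnorm_proj_le x : hnorm (P x) <= hnorm x.
Proof.
rewrite -(ler_pXn2r (n := 2)) ?nnegrE ?hnorm_ge0 // !hnorm_sqr.
by rewrite (dotr_proj_pythagoras x) lerDl dotrr_ge0.
Qed.

Lemma hnorm_proj_compl_le x : hnorm (x - P x) <= hnorm x.
Proof.
rewrite -(ler_pXn2r (n := 2)) ?nnegrE ?hnorm_ge0 // !hnorm_sqr.
by rewrite (dotr_proj_pythagoras x) lerDr dotrr_ge0.
Qed.

Lemma proj_bounded : bounded_by P 1.
Proof. by move=> x; rewrite mul1r hnorm_proj_le. Qed.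

End Projection.

End Operators.

Section Convergence.
Variables (R : realType) (V : hilbertSpace R).
Implicit Types (u : nat -> V) (v w y : V) (r : nat -> R).

Lemma hconv_squeeze u v r :
  (forall n, hnorm (u n - v) <= r n) -> r @ \oo --> 0 -> hconv u v.
Proof.
move=> ur r0; apply: (squeeze_cvgr _ (cvg_cst 0) r0).
by apply: nearW => n; rewrite hnorm_ge0 ur.
Qed.

Lemma hconv_le u v w (B : R) : hconv u v ->
  (\forall n \near \oo, hnorm (u n - w) <= B) -> hnorm (v - w) <= B.
Proof.
move=> uv uwB; rewrite -[leRHS]addr0.
apply: (@cvgr_to_ge _ \oo _ _ (fun n => B + hnorm (u n - v))).
  by apply: cvgD => //; exact: cvg_cst.
near=> n; have -> : v - w = (u n - w) - (u n - v) by rewrite opprB [RHS]addrC addrA subrK.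
apply: le_trans (hnormB _ _) (lerD _ (lexx _)); near: n; exact: uwB.
Unshelve. all: by end_near. Qed.

Lemma hconv_unique u v w : hconv u v -> hconv u w -> v = w.
Proof.
move=> uv uw; apply/eqP; rewrite -subr_eq0; apply/eqP/hnorm_eq0/eqP.
rewrite eq_le hnorm_ge0 andbT -[leRHS]addr0.
apply: (@cvgr_to_ge _ \oo _ _ (fun n => hnorm (u n - w) + hnorm (u n - v))).
  exact: cvgD.
apply: nearW => n; have -> : v - w = (u n - w) - (u n - v) by rewrite opprB [RHS]addrC addrA subrK.
exact: hnormB.
Qed.

Lemma hconv_lin (a : R[i]) u u' v v' : hconv u v -> hconv u' v' ->
  hconv (fun n => a *: u n + u' n) (a *: v + v').
Proof.
move=> uv u'v'.
apply: (hconv_squeeze (r := fun n => Normc.normc a * hnorm (u n - v) + hnorm (u' n - v'))).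
  move=> n; rewrite opprD addrACA -scalerBr; apply: le_trans (hnormD _ _) _.
  by rewrite hnormZ.
rewrite -[X in _ --> X]addr0 -[X in _ --> X + _](mulr0 (Normc.normc a)).
by apply: cvgD => //; apply: cvgM => //; exact: cvg_cst.
Qed.

Lemma hconv_bounded (A : V -> V) (L : R) u v : linear A -> bounded_by A L ->
  hconv u v -> hconv (fun n => A (u n)) (A v).
Proof.
move=> A_lin A_bd uv; apply: (hconv_squeeze (r := fun n => L * hnorm (u n - v))).
  by move=> n; rewrite -linB.
by rewrite -(mulr0 L); apply: cvgM => //; exact: cvg_cst.
Qed.

Lemma hconv_dotr u v y : hconv u v -> (fun n => dotr (u n) y) @ \oo --> dotr v y.
Proof.
move=> uv; apply/subr_cvg0/norm_cvg0P.
apply: (@squeeze_cvgr _ _ _ _ (fun=> 0) (fun n => hnorm (u n - v) * hnorm y)).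
- by apply: nearW => n; rewrite normr_ge0 -dotrBl normr_dotr_le.
- exact: cvg_cst.
- by rewrite -(mul0r (hnorm y)); apply: cvgM => //; exact: cvg_cst.
Qed.

End Convergence.

Section ExpTerm.
Variable F : numFieldType.

(* [exp_coeff] of sequences.v lives over a realType; complex scalars need it over any field. *)
Definition exp_term (a : F) (k : nat) : F := a ^+ k / k`!%:R.

Lemma sum_nat_triangle (M : zmodType) (G : nat -> nat -> M) N :
  \sum_(0 <= m < N) \sum_(0 <= i < m.+1) G (m - i)%N i =
  \sum_(0 <= j < N) \sum_(0 <= i < N - j) G j i.
Proof.
elim: N => [|N IH]; first by rewrite !big_geq.
rewrite [in LHS]big_nat_recr //= IH.
have -> : \sum_(0 <= j < N.+1) \sum_(0 <= i < N.+1 - j) G j i =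
   \sum_(0 <= j < N.+1) (\sum_(0 <= i < N - j) G j i + G j (N - j)%N).
  by apply: eq_big_nat => j /andP[_ hj]; rewrite subSn // big_nat_recr.
rewrite big_split /= [X in _ = X + _]big_nat_recr //= subnn (@big_geq _ _ _ 0 0) // addr0.
congr (_ + _); rewrite big_nat_rev /=; apply: eq_big_nat => i /andP[_ hi].
by rewrite add0n subSS subKn.
Qed.

Lemma sum_exp_termD (M : lmodType F) (a b : F) (w : nat -> M) N :
  \sum_(0 <= m < N) exp_term (a + b) m *: w m =
  \sum_(0 <= j < N) \sum_(0 <= i < N - j) (exp_term b j * exp_term a i) *: w (j + i)%N.
Proof.
rewrite -sum_nat_triangle; apply: eq_bigr => m _.
rewrite big_mkord /exp_term addrC exprDn mulr_suml scaler_suml; apply: eq_bigr => i _.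
have hi : (i <= m)%N by rewrite -ltnS ltn_ord.
rewrite subnK //; congr (_ *: _).
rewrite -(bin_fact hi) !natrM -(mulr_natr (b ^+ (m - i) * a ^+ i)).
have f1 : (i`!%:R : F) != 0 by rewrite pnatr_eq0 -lt0n fact_gt0.
have f2 : ((m - i)`!%:R : F) != 0 by rewrite pnatr_eq0 -lt0n fact_gt0.
have f3 : ('C(m, i)%:R : F) != 0 by rewrite pnatr_eq0 -lt0n bin_gt0.
by field; rewrite f1 f2 f3.
Qed.

Lemma sum_exp_term_corner (M : lmodType F) (a b : F) (w : nat -> M) N :
  \sum_(0 <= j < N) \sum_(0 <= i < N) (exp_term b j * exp_term a i) *: w (j + i)%N
  - \sum_(0 <= m < N) exp_term (a + b) m *: w m =
  \sum_(0 <= j < N) \sum_(N - j <= i < N) (exp_term b j * exp_term a i) *: w (j + i)%N.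
Proof.
rewrite sum_exp_termD -sumrB; apply: eq_bigr => j _.
by rewrite (big_cat_nat (leq0n _) (leq_subr j N)) /= addrC addrK.
Qed.

End ExpTerm.
Arguments exp_term {F}.

Lemma normc_exp_term (R : realType) (a : R[i]) k :
  Normc.normc (exp_term a k) = exp_coeff (Normc.normc a) k.
Proof. by rewrite /exp_term Normc.normcM normc_natV normcX. Qed.

Lemma conjc_exp_term (R : realType) (a : R[i]) k : (exp_term a k)^* = exp_term a^* k.
Proof. by rewrite /exp_term rmorphM /= fmorphV /= rmorph_nat rmorphXn. Qed.

Section RealExpSeries.
Variable R : realType.
Implicit Types (C : R).

Lemma nondecreasing_series_exp_coeff C : 0 <= C ->
  {homo series (exp_coeff C) : n m / (n <= m)%N >-> n <= m}.
Proof. by move=> C0; apply: nondecreasing_series => n _ _; exact: exp_coeff_ge0. Qed.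

Lemma series_exp_coeff_le C N : 0 <= C -> series (exp_coeff C) N <= expR C.
Proof.
move=> C0; have := nondecreasing_cvgn_le (nondecreasing_series_exp_coeff C0).
by move/(_ (is_cvg_series_exp_coeff C) N); rewrite (cvg_lim _ (is_cvg_series_exp_coeff C)).
Qed.

Lemma exp2n_le_fact n : (2 ^ n <= n.+1`!)%N.
Proof. by elim: n => // n IH; rewrite factS expnS leq_mul. Qed.

Lemma exp_coeff_le_halfpow C k : 0 <= C -> C <= 1 -> (2 <= k)%N ->
  exp_coeff C k <= C ^+ 2 * 2^-1 ^+ k.-1.
Proof.
move=> C0 C1; case: k => // -[//|j] _ /=.
apply: ler_pM; rewrite ?exprn_ge0 ?invr_ge0 ?ler0n //.
  by rewrite (_ : j.+2 = 2 + j)%N // exprD ler_piMr ?exprn_ge0 ?exprn_ile1.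
rewrite exprVn -natrX lef_pV2 ?posrE ?ltr0n ?expn_gt0 ?fact_gt0 // ler_nat.
exact: exp2n_le_fact.
Qed.

Lemma sum_exp_coeff_tail_le C n : 0 <= C -> C <= 1 ->
  \sum_(2 <= k < n) exp_coeff C k <= C ^+ 2.
Proof.
move=> C0 C1; case: n => [|[|m]]; try by rewrite big_geq // exprn_ge0.
apply: le_trans (_ : \sum_(2 <= k < m.+2) C ^+ 2 * 2^-1 ^+ k.-1 <= _).
  by apply: ler_sum_nat => k /andP[k2 _]; exact: exp_coeff_le_halfpow.
have geom : \sum_(2 <= k < m.+2) (2^-1 : R) ^+ k.-1 = 1 - 2^-1 ^+ m.
  elim: m => [|m IH]; first by rewrite big_geq // expr0 subrr.
  by rewrite big_nat_recr //= IH exprS; lra.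
by rewrite -mulr_sumr geom ler_piMr ?exprn_ge0 // gerBl exprn_ge0.
Qed.

Lemma series_exp_coeff_corner (a b : R) N :
  series (exp_coeff b) N * series (exp_coeff a) N - series (exp_coeff (a + b)) N =
  \sum_(0 <= j < N) \sum_(N - j <= i < N) exp_coeff b j * exp_coeff a i.
Proof.
have := sum_exp_term_corner a b (fun=> (1 : R^o)) N.
rewrite /GRing.scale /= => corner.
rewrite /series /= big_distrlr /=; apply: etrans (etrans _ corner) _.
- congr (_ - _); last by apply: eq_bigr => m _; rewrite mulr1.
  by apply: eq_bigr => j _; apply: eq_bigr => i _; rewrite mulr1.
- by apply: eq_bigr => j _; apply: eq_bigr => i _; rewrite mulr1.
Qed.

Lemma cvg_series_exp_coeff_corner (a b : R) :
  (fun N => series (exp_coeff b) N * series (exp_coeff a) N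
            - series (exp_coeff (a + b)) N) @ \oo --> 0.
Proof.
rewrite -(subrr (expR (a + b))) [X in _ --> X - _]expRD mulrC.
by apply: cvgB; [apply: cvgM|]; exact: is_cvg_series_exp_coeff.
Qed.

End RealExpSeries.

Section OperatorExponential.
Variables (R : realType) (V : hilbertSpace R).

Definition opexpZ (K : V -> V) (a : R[i]) : V -> V := opexp (fun z => a *: K z).

Variables (K : V -> V) (L : R).
Hypotheses (K_lin : linear K) (K_bd : bounded_by K L) (L_ge0 : 0 <= L).
Implicit Types (a b : R[i]) (x y : V).

Definition opexpZ_sum a x N := \sum_(0 <= k < N) exp_term a k *: iter k K x.

Lemma opexpZE a x : opexpZ K a x = xget 0 [set v | hconv (opexpZ_sum a x) v].
Proof.
rewrite /opexpZ /opexp.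
suff -> : (fun N => \sum_(k < N) (k`!%:R : R[i])^-1 *: iter k (fun z => a *: K z) x)
  = opexpZ_sum a x by [].
apply/funext => N; rewrite /opexpZ_sum big_mkord; apply: eq_bigr => k _.
by rewrite iter_scale // scalerA mulrC.
Qed.

Lemma hnorm_exp_term_iter a x k :
  hnorm (exp_term a k *: iter k K x) <= exp_coeff (Normc.normc a * L) k * hnorm x.
Proof.
rewrite hnormZ normc_exp_term.
apply: le_trans (ler_wpM2l _ (bounded_by_iter k x K_bd L_ge0)) _.
  exact/exp_coeff_ge0/normc_ge0.
by rewrite /exp_coeff /= exprMn mulrA [_ * L ^+ k]mulrAC.
Qed.

Lemma hnorm_opexpZ_sumB a x m n : (n <= m)%N ->
  hnorm (opexpZ_sum a x m - opexpZ_sum a x n) <=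
  (series (exp_coeff (Normc.normc a * L)) m
   - series (exp_coeff (Normc.normc a * L)) n) * hnorm x.
Proof.
move=> nm; rewrite /opexpZ_sum /series /=.
rewrite (big_cat_nat (leq0n n) nm) /= addrC addrK.
rewrite (big_cat_nat (leq0n n) nm) /= addrC addrK.
apply: le_trans; first exact: hnorm_sum.
by rewrite mulr_suml; apply: ler_sum => k _; exact: hnorm_exp_term_iter.
Qed.

Lemma hnorm_opexpZ_sum_le a x N :
  hnorm (opexpZ_sum a x N) <= expR (Normc.normc a * L) * hnorm x.
Proof.
have := hnorm_opexpZ_sumB a x (leq0n N).
rewrite /opexpZ_sum /series /= !(@big_geq _ _ _ 0 0) // !subr0 => /le_trans; apply.
by rewrite ler_wpM2r ?hnorm_ge0 ?series_exp_coeff_le ?mulr_ge0 ?normc_ge0.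
Qed.

Lemma hconv_opexpZ a x : hconv (opexpZ_sum a x) (opexpZ K a x).
Proof.
rewrite opexpZE; apply: xgetPex.
set C := Normc.normc a * L; have C_ge0 : 0 <= C by rewrite mulr_ge0 ?normc_ge0.
apply: inner_complete => e e_gt0.
pose d := e / (hnorm x + 1).
have d_gt0 : 0 < d by rewrite divr_gt0 // ltr_wpDl ?hnorm_ge0.
have de : d * (hnorm x + 1) = e by rewrite divfK // gt_eqF // ltr_wpDl ?hnorm_ge0.
have dC : expR C - d < expR C by rewrite gtrBl.
have [N _ SN] := cvgr_gt _ (is_cvg_series_exp_coeff C) _ dC.
exists N => m n Nm Nn; rewrite -/(hnorm _).
wlog nm : m n Nm Nn / (n <= m)%N => [gen|].
  by have [/gen|/ltnW/gen] := leqP n m; last rewrite hnorm_distC; apply.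
apply: le_lt_trans (hnorm_opexpZ_sumB a x nm) _.
have := SN n Nn; have := series_exp_coeff_le m C_ge0; have := hnorm_ge0 x; nra.
Qed.

Lemma opexpZ_unique a x v : hconv (opexpZ_sum a x) v -> opexpZ K a x = v.
Proof. exact: hconv_unique (hconv_opexpZ a x). Qed.

Lemma opexpZ_sum_linear a N : linear (fun x => opexpZ_sum a x N).
Proof.
move=> al x y; rewrite /opexpZ_sum scaler_sumr -big_split; apply: eq_bigr => k _.
by rewrite linear_iter // scalerDr !scalerA mulrC.
Qed.

Lemma linear_opexpZ a : linear (opexpZ K a).
Proof.
move=> al x y; apply: opexpZ_unique.
have -> : opexpZ_sum a (al *: x + y) = fun N => al *: opexpZ_sum a x N + opexpZ_sum a y N.
  by apply/funext => N; exact: opexpZ_sum_linear.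
exact: hconv_lin (hconv_opexpZ a x) (hconv_opexpZ a y).
Qed.

Lemma opexpZ_sum_head a x n : (2 <= n)%N ->
  opexpZ_sum a x n = x + a *: K x + \sum_(2 <= k < n) exp_term a k *: iter k K x.
Proof.
move=> n2; rewrite /opexpZ_sum (big_cat_nat (leq0n 2) n2) /= !big_nat_recl // big_geq //.
by rewrite /exp_term /= expr0 expr1 fact0 !divr1 scale1r addrA addr0.
Qed.

Lemma opexpZ_taylor1 a x : Normc.normc a * L <= 1 ->
  hnorm (opexpZ K a x - (x + a *: K x)) <= (Normc.normc a * L) ^+ 2 * hnorm x.
Proof.
move=> C1; have C0 : 0 <= Normc.normc a * L by rewrite mulr_ge0 ?normc_ge0.
apply: (hconv_le (hconv_opexpZ a x)); near=> n.
rewrite opexpZ_sum_head; last by near: n; exact: nbhs_infty_ge.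
rewrite addrC addKr; apply: le_trans; first exact: hnorm_sum.
apply: le_trans (_ : \sum_(2 <= k < n) exp_coeff (Normc.normc a * L) k * hnorm x <= _).
  by apply: ler_sum => k _; exact: hnorm_exp_term_iter.
by rewrite -mulr_suml ler_wpM2r ?hnorm_ge0 ?sum_exp_coeff_tail_le.
Unshelve. all: by end_near. Qed.

Lemma opexpZ0 x : opexpZ K 0 x = x.
Proof.
apply: opexpZ_unique; apply: cvg_near_cst; near=> n.
have n_gt0 : (0 < n)%N by near: n; exact: nbhs_infty_ge.
rewrite /opexpZ_sum -(prednK n_gt0) big_nat_recl // big1 => [|k _].
  by rewrite /exp_term expr0 fact0 divr1 scale1r addr0 subrr hnorm0.
by rewrite /exp_term expr0n mul0r scale0r.
Unshelve. all: by end_near. Qed.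

Lemma opexpZ_sum_comp a b x N : opexpZ_sum b (opexpZ_sum a x N) N =
  \sum_(0 <= j < N) \sum_(0 <= i < N) (exp_term b j * exp_term a i) *: iter (j + i) K x.
Proof.
rewrite /opexpZ_sum; apply: eq_bigr => j _.
rewrite (lin_sum (linear_iter K_lin j)) scaler_sumr; apply: eq_bigr => i _.
by rewrite (linZ (linear_iter K_lin j)) -iterD scalerA.
Qed.

Lemma hnorm_opexpZ_sum_compB a b x N :
  hnorm (opexpZ_sum b (opexpZ_sum a x N) N - opexpZ_sum (a + b) x N) <=
  (series (exp_coeff (Normc.normc b * L)) N * series (exp_coeff (Normc.normc a * L)) N
   - series (exp_coeff (Normc.normc a * L + Normc.normc b * L)) N) * hnorm x.
Proof.
rewrite opexpZ_sum_comp /opexpZ_sum sum_exp_term_corner series_exp_coeff_corner.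
apply: le_trans; first exact: hnorm_sum.
rewrite mulr_suml; apply: ler_sum => j _.
apply: le_trans; first exact: hnorm_sum.
rewrite mulr_suml; apply: ler_sum => i _.
rewrite hnormZ Normc.normcM !normc_exp_term.
apply: le_trans (ler_wpM2l _ (bounded_by_iter (j + i) x K_bd L_ge0)) _.
  by rewrite mulr_ge0 ?exp_coeff_ge0 ?mulr_ge0 ?normc_ge0.
rewrite /exp_coeff /= !exprMn exprD le_eqVlt; apply/orP; left; apply/eqP; ring.
Qed.

Lemma opexpZD a b x : opexpZ K b (opexpZ K a x) = opexpZ K (a + b) x.
Proof.
set y := opexpZ K a x; symmetry; apply: opexpZ_unique.
set al := Normc.normc a * L; set be := Normc.normc b * L.
pose corner N := series (exp_coeff be) N * series (exp_coeff al) N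
                 - series (exp_coeff (al + be)) N.
apply: (hconv_squeeze (r := fun N => corner N * hnorm x
   + expR be * hnorm (opexpZ_sum a x N - y) + hnorm (opexpZ_sum b y N - opexpZ K b y))).
  move=> N; set D := opexpZ_sum b (opexpZ_sum a x N) N.
  apply: le_trans (hnorm_distD3 _ D (opexpZ_sum b y N) _) _.
  rewrite hnorm_distC -(linB (opexpZ_sum_linear b N)) lerD2r.
  by apply: lerD; [exact: hnorm_opexpZ_sum_compB | exact: hnorm_opexpZ_sum_le].
rewrite -[X in _ --> X](addr0 0) -[X in _ --> X + _](addr0 0).
rewrite -[X in _ --> X + _ + _](mul0r (hnorm x)) -[X in _ --> _ + X + _](mulr0 (expR be)).
apply: cvgD; [apply: cvgD|]; last exact: hconv_opexpZ.
- by apply: cvgM; [exact: cvg_series_exp_coeff_corner|exact: cvg_cst].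
- by apply: cvgM; [exact: cvg_cst|exact: hconv_opexpZ].
Qed.

Lemma opexpZ_natmul n a x : opexpZ K (n%:R * a) x = iter n (opexpZ K a) x.
Proof.
elim: n => [|n IH] /=; first by rewrite mul0r opexpZ0.
by rewrite -IH opexpZD -addn1 natrD mulrDl mul1r.
Qed.

Section SelfAdjoint.
Hypothesis K_selfadj : forall x y, inner (K x) y = inner x (K y).

Lemma inner_iter_selfadj k x y : inner (iter k K x) y = inner x (iter k K y).
Proof. by elim: k x y => [//|k IH] x y; rewrite iterSr IH K_selfadj. Qed.

Lemma inner_opexpZ_sum a x y N :
  inner (opexpZ_sum a x N) y = inner x (opexpZ_sum a^* y N).
Proof.
rewrite /opexpZ_sum inner_suml inner_sumr; apply: eq_bigr => k _.
by rewrite innerZl innerZr inner_iter_selfadj; congr (_ * _); exact: conjc_exp_term.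
Qed.

Lemma dotr_opexpZ a x y : dotr (opexpZ K a x) y = dotr x (opexpZ K a^* y).
Proof.
have lim1 := hconv_dotr (y := y) (hconv_opexpZ a x).
have lim2 := hconv_dotr (y := x) (hconv_opexpZ a^* y).
have seqE : (fun N => dotr (opexpZ_sum a x N) y) = (fun N => dotr (opexpZ_sum a^* y N) x).
  by apply/funext => N; rewrite /dotr inner_opexpZ_sum -/(dotr _ _) dotrC.
by rewrite seqE in lim1; rewrite [RHS]dotrC; apply: cvg_unique lim1 lim2.
Qed.

Lemma hnorm_opexpZ a x : a^* = - a -> hnorm (opexpZ K a x) = hnorm x.
Proof.
by move=> a_imag; rewrite /hnorm -!/(dotr _ _) dotr_opexpZ a_imag opexpZD subrr opexpZ0.
Qed.

End SelfAdjoint.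

Lemma opexpZ_proj (P : V -> V) a x : hprojection P -> (forall z, P (K z) = K z) ->
  P x = x -> P (opexpZ K a x) = opexpZ K a x.
Proof.
move=> P_proj PK Px.
have Psum N : P (opexpZ_sum a x N) = opexpZ_sum a x N.
  rewrite /opexpZ_sum (lin_sum (proj_linear P_proj)); apply: eq_bigr => -[|k] _.
    by rewrite (linZ (proj_linear P_proj)) Px.
  by rewrite (linZ (proj_linear P_proj)) iterS PK.
have := hconv_bounded (proj_linear P_proj) (proj_bounded P_proj) (hconv_opexpZ a x).
by rewrite (funext Psum) => /opexpZ_unique {2}->.
Qed.

End OperatorExponential.

Section Telescoping.
Variables (R : realType) (V : hilbertSpace R) (A B Q : V -> V) (d0 d : R).
Hypotheses (A_lin : linear A) (A_contr : forall x, hnorm (A x) <= hnorm x).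
Hypotheses (B_contr : forall x, hnorm (B x) <= hnorm x).
Hypotheses (Q_contr : forall x, hnorm (Q x) <= hnorm x) (Q_idem : forall x, Q (Q x) = Q x).
Hypothesis QB : forall y, Q y = y -> Q (B y) = B y.
Hypothesis d_ge0 : 0 <= d.
Hypothesis first_step : forall x, hnorm (A x - B (Q x)) <= d0 * hnorm x.
Hypothesis step : forall y, Q y = y -> hnorm (A y - B y) <= d * hnorm y.

Lemma iter_invariant m x : Q (iter m B (Q x)) = iter m B (Q x).
Proof. by elim: m => [|m IH] /=; [exact: Q_idem | exact: QB]. Qed.

Lemma hnorm_iter_le m x : hnorm (iter m B (Q x)) <= hnorm x.
Proof. by elim: m => [|m IH] /=; [exact: Q_contr | exact: le_trans (B_contr _) IH]. Qed.

Lemma hnorm_iter_telescope m x :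
  hnorm (iter m.+1 A x - iter m.+1 B (Q x)) <= (d0 + m%:R * d) * hnorm x.
Proof.
elim: m => [|m IH]; first by rewrite mul0r addr0; exact: first_step.
set y := iter m.+1 B (Q x).
have -> : iter m.+2 A x - iter m.+2 B (Q x) = A (iter m.+1 A x - y) + (A y - B y).
  by rewrite /= (linB A_lin) addrA subrK.
apply: le_trans (hnormD _ _) _.
have := step (iter_invariant m.+1 x); have := ler_wpM2l d_ge0 (hnorm_iter_le m.+1 x).
have := A_contr (iter m.+1 A x - y); move: IH; rewrite -/y -addn1 natrD; lra.
Qed.

End Telescoping.

Section ProjectedEvolution.
Variables (R : realType) (V : hilbertSpace R) (H P : V -> V) (a : R[i]).
Hypotheses (H_herm : hermitian_op H) (P_proj : hprojection P) (a_imag : a^* = - a).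

Let L := opnorm H.
Let c := Normc.normc a * L.
Let K := fun z => P (H (P z)).
Let U := opexpZ H a.
Let W := opexpZ K a.

Let H_lin : linear H. Proof. exact: H_herm.1.1. Qed.
Let H_bd : bounded_by H L. Proof. exact: bounded_by_opnorm H_herm.1. Qed.
Let L_ge0 : 0 <= L. Proof. exact: opnorm_ge0 H_herm.1. Qed.
Let H_selfadj x y : inner (H x) y = inner x (H y). Proof. exact: H_herm.2. Qed.
Let P_lin : linear P. Proof. exact: proj_linear P_proj. Qed.
Let K_lin : linear K. Proof. exact: linear_comp P_lin (linear_comp H_lin P_lin). Qed.

Let K_bd : bounded_by K L.
Proof.
move=> z; apply: le_trans (hnorm_proj_le P_proj _) _.
by apply: le_trans (H_bd _) _; rewrite ler_wpM2l ?hnorm_proj_le.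
Qed.

Let K_selfadj x y : inner (K x) y = inner x (K y).
Proof. by rewrite /K proj_selfadj // H_selfadj proj_selfadj. Qed.

Let PK z : P (K z) = K z.
Proof. exact: proj_idem P_proj _. Qed.

Let hnorm_U y : hnorm (U y) = hnorm y.
Proof. by rewrite /U; apply: (hnorm_opexpZ H_lin H_bd L_ge0 H_selfadj y). Qed.

Let hnorm_W y : hnorm (W y) = hnorm y.
Proof. by rewrite /W; apply: (hnorm_opexpZ K_lin K_bd L_ge0 K_selfadj y). Qed.

Let c_ge0 : 0 <= c. Proof. by rewrite mulr_ge0 ?normc_ge0. Qed.

Lemma hnorm_proj_evolution_step x :
  hnorm (P (U x) - W (P x)) <= c * hnorm (x - P x) + 2 * c ^+ 2 * hnorm x.
Proof.
have PUx_le : hnorm (P (U x)) <= hnorm x.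
  by apply: le_trans (hnorm_proj_le P_proj _) _; rewrite hnorm_U.
have WPx_le : hnorm (W (P x)) <= hnorm x by rewrite hnorm_W hnorm_proj_le.
have [c_le1|c_gt1] := lerP c 1; last first.
  (* for c > 1, unitarity alone gives the bound 2 * hnorm x *)
  have := hnormB (P (U x)) (W (P x)); have := hnorm_ge0 (x - P x).
  have : 1 <= c ^+ 2 by rewrite exprn_ege1 // ltW.
  have := hnorm_ge0 x; nra.
have first_order : P (x + a *: H x) - (P x + a *: K (P x)) = a *: P (H (x - P x)).
  rewrite (linD P_lin) (linZ P_lin) /K proj_idem // opprD addrACA subrr add0r.
  by rewrite -scalerBr -(linB P_lin) -(linB H_lin).
apply: le_trans (hnorm_distD3 _ (P (x + a *: H x)) (P x + a *: K (P x)) _) _.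
rewrite -(linB P_lin) first_order (hnorm_distC _ (W _)).
have taylorU : hnorm (U x - (x + a *: H x)) <= c ^+ 2 * hnorm x.
  by apply: (opexpZ_taylor1 H_lin H_bd L_ge0 x).
have taylorW : hnorm (W (P x) - (P x + a *: K (P x))) <= c ^+ 2 * hnorm (P x).
  by apply: (opexpZ_taylor1 K_lin K_bd L_ge0 (P x)).
have first_order_le : hnorm (a *: P (H (x - P x))) <= c * hnorm (x - P x).
  rewrite hnormZ /c -mulrA ler_wpM2l ?normc_ge0 //.
  exact: le_trans (hnorm_proj_le P_proj _) (H_bd _).
have := le_trans (hnorm_proj_le P_proj _) taylorU.
have := ler_wpM2l (exprn_ge0 2 c_ge0) (hnorm_proj_le P_proj x); lra.
Qed.

Lemma hnorm_proj_evolution_iter m x :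
  hnorm (iter m.+1 (fun y => P (U y)) x - opexpZ K (m.+1%:R * a) (P x))
  <= (c + 2 * c ^+ 2 * m.+1%:R) * hnorm x.
Proof.
rewrite (opexpZ_natmul K_lin K_bd L_ge0) -/W.
have PU_lin : linear (fun y => P (U y)).
  exact: linear_comp P_lin (linear_opexpZ H_lin H_bd L_ge0 a).
have PU_contr y : hnorm (P (U y)) <= hnorm y by rewrite -(hnorm_U y) hnorm_proj_le.
have W_contr y : hnorm (W y) <= hnorm y by rewrite hnorm_W.
have PW y : P y = y -> P (W y) = W y.
  by rewrite /W; apply: (opexpZ_proj K_lin K_bd L_ge0 a P_proj PK).
have first_step y : hnorm (P (U y) - W (P y)) <= (c + 2 * c ^+ 2) * hnorm y.
  have := hnorm_proj_evolution_step y.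
  have := ler_wpM2l c_ge0 (hnorm_proj_compl_le P_proj y); lra.
have step y : P y = y -> hnorm (P (U y) - W y) <= 2 * c ^+ 2 * hnorm y.
  move=> Py; have := hnorm_proj_evolution_step y.
  by rewrite Py subrr hnorm0 mulr0 add0r.
have d_ge0 : 0 <= 2 * c ^+ 2 by rewrite mulr_ge0 ?exprn_ge0.
apply: le_trans (hnorm_iter_telescope PU_lin PU_contr W_contr
  (hnorm_proj_le P_proj) (proj_idem P_proj) PW d_ge0 first_step step m x) _.
by rewrite -addn1 natrD; lra.
Qed.

End ProjectedEvolution.

Theorem corollary3p2 (R : realType) (V : hilbertSpace R) (H P : V -> V) :
  hermitian_op H -> hprojection P ->
  forall (t : R) (n : nat), 0 <= t -> (0 < n)%N ->
  opnorm (fun x : V =>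
            iter n (fun y => P (opexp (fun z => (0 -i* (t / n%:R)) *: H z) y)) x
            - opexp (fun z => (0 -i* t) *: P (H (P z))) (P x))
    <= n%:R^-1 * (t * opnorm H + 5 / 2 * t ^+ 2 * opnorm H ^+ 2).
Proof.
move=> H_herm P_proj t n t_ge0 n_gt0; apply: opnorm_le => x x_le1.
set tau := t / n%:R; set c := tau * opnorm H.
have tau_ge0 : 0 <= tau by rewrite divr_ge0 ?ler0n.
have c_ge0 : 0 <= c := mulr_ge0 tau_ge0 (opnorm_ge0 H_herm.1).
have t_ntau : t = n%:R * tau by rewrite /tau mulrC divfK // pnatr_eq0 -lt0n.
rewrite {1}t_ntau pure_imag_natmul -(prednK n_gt0).
apply: le_trans (hnorm_proj_evolution_iter H_herm P_proj (conjc_pure_imag _) n.-1 x) _.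
rewrite prednK // normc_pure_imag ger0_norm // -/c.
have -> : n%:R^-1 * (t * opnorm H + 5 / 2 * t ^+ 2 * opnorm H ^+ 2)
    = c + 5 / 2 * c ^+ 2 * n%:R by rewrite t_ntau /c; field; rewrite pnatr_eq0 -lt0n.
have d_ge0 : 0 <= c ^+ 2 * n%:R by rewrite mulr_ge0 ?exprn_ge0 ?ler0n.
have := ler_wpM2l (addr_ge0 c_ge0 (mulr_ge0 (ler0n _ 2) d_ge0)) x_le1.
rewrite mulr1 mulrA; lra.
Qed.
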